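(* Let $A=\prod_{i=1}^M\mathbb{Z}_{N_i}$ with each $N_i$ a prime power, let $\{t_i\}$ be numbers with $t_i\in\frac12\mathbb{Z}$ if $N_i$ is even and $t_i\in\mathbb{Z}$ if $N_i$ is odd, and let $\{p_{ij}\}_{i\neq j}$ be integers with $p_{ij}=p_{ji}$; set $p_{ii}=\lfloor t_i\rfloor$, $N_{ij}=\gcd(N_i,N_j)$, and $n_i=0$ if $t_i\in\mathbb{Z}$, $n_i=N_i/2$ if $t_i\in\frac12+\mathbb{Z}$. Consider the Abelian anyon theory $\mathcal{T}$ whose fusion group is the abelian group freely generated by elements $c_i,\varphi_i$ ($i=1,\dots,M$) subject only to $c_i^{N_i}=\varphi_i^{N_i}=1$, with exchange statistics determined (via $\theta(xy)=\theta(x)\theta(y)B_\theta(x,y)$, $B_\theta$ bimultiplicative and symmetric) by $\theta(c_i)=1$, $\theta(\varphi_i)=e^{2\pi i n_i/N_i^2}$, $B_\theta(c_i,c_j)=1$, $B_\theta(\varphi_i,c_j)=e^{2\pi i\delta_{ij}/N_i}$, $B_\theta(\varphi_i,\varphi_j)=1$ for $i\ne j$ (a stack of $M$ decoupled twisted quantum doubles). Define $a_i=\varphi_i\prod_{j=1}^{i}c_j^{p_{ji}N_j/N_{ij}}$. Then each $a_i$ has order $N_i$, the $a_i$ generate a subgroup isomorphic to $A$, and $$\theta(a_i)=e^{2\pi i t_i/N_i},\qquad B_\theta(a_i,a_j)=e^{2\pi i p_{ij}/N_{ij}}\ (i\neq j).$$ Hence the subtheory generated by $\{a_i\}$ is the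 Abelian anyon theory with fusion group $A$, generator statistics $t_i$ and mutual braidings $p_{ij}$; every Abelian anyon theory arises this way.
   Context: An Abelian anyon theory is a pair $(A,\theta)$ with $A$ a finite abelian group (anyon types under fusion) and $\theta:A\to U(1)$ the exchange statistics; the braiding phase is $B_\theta(a,b)=\theta(ab)/(\theta(a)\theta(b))$, required to be symmetric and bimultiplicative. Every Abelian anyon theory can be parameterized by a decomposition $A=\prod_i\mathbb{Z}_{N_i}$ into prime-power cyclic factors with generators $a_i$, $\theta(a_i)=e^{2\pi i t_i/N_i}$ ($t_i$ as stated) and $B_\theta(a_i,a_j)=e^{2\pi i p_{ij}/N_{ij}}$ for $i\ne j$. $\lfloor t\rfloor$ is the floor function. *)

From Stdlib Require Import ZArith Znumtheory Reals.
From Coquelicot Require Import Coquelicot.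

Open Scope Z_scope.

Definition expi (q : R) : C := (cos (2 * PI * q), sin (2 * PI * q))%R.

Definition prime_power (n : Z) : Prop :=
  exists p k, prime p /\ 1 <= k /\ n = p ^ k.

(* Elements of the free abelian group on c_i, phi_i (i in nat; only
   i < M will be relevant): a pair (u, v) of exponent vectors,
   representing prod_i c_i^{u i} phi_i^{v i}. *)
Definition elt := ((nat -> Z) * (nat -> Z))%type.

Definition gzero : elt := (fun _ => 0, fun _ => 0).
Definition gadd (x y : elt) : elt :=
  (fun i => fst x i + fst y i, fun i => snd x i + snd y i).
Definition gscale (k : Z) (x : elt) : elt :=
  (fun i => k * fst x i, fun i => k * snd x i).
Fixpoint gsum (n : nat) (f : nat -> elt) : elt :=
  match n with
  | O => gzero
  | S n' => gadd (gsum n' f) (f n')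
  end.

Definition delta (i : nat) : nat -> Z := fun j => if Nat.eqb j i then 1 else 0.
Definition gen_c (i : nat) : elt := (delta i, fun _ => 0).
Definition gen_phi (i : nat) : elt := (fun _ => 0, delta i).

(* Equality in the fusion group: the abelian group generated by c_i, phi_i
   (i < M) subject only to c_i^{N_i} = phi_i^{N_i} = 1, i.e. equality of
   exponents modulo N_i for i < M. *)
Definition geq (M : nat) (N : nat -> Z) (x y : elt) : Prop :=
  forall i, (i < M)%nat ->
    (N i | fst x i - fst y i) /\ (N i | snd x i - snd y i).

Definition braid (theta : elt -> C) (x y : elt) : C :=
  Cdiv (theta (gadd x y)) (Cmult (theta x) (theta y)).

(* t_i is encoded by the integer T_i = 2 t_i. *)
Definition n_of (N T : Z) : Z := if Z.even T then 0 else N / 2.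

Definition pfull (T : nat -> Z) (p : nat -> nat -> Z) (i j : nat) : Z :=
  if Nat.eqb i j then T i / 2 else p i j.

(* a_i = phi_i * prod_{j <= i} c_j^{p_{ji} N_j / N_{ij}}  (0-indexed) *)
Definition gen_a (N T : nat -> Z) (p : nat -> nat -> Z) (i : nat) : elt :=
  gadd (gen_phi i)
    (gsum (S i) (fun j =>
       gscale (pfull T p j i * N j / Z.gcd (N i) (N j)) (gen_c j))).

(* The c_j are mutually transparent bosons, so the c-part of a_i has trivial spin and braids
   trivially with itself and with the other c-parts; it only sees phi_i through the
   braiding B(phi_i, c_i) = e^{2 pi i / N_i}.  The exponent p_{ji} N_j / N_{ij} of c_j is
   chosen so that this braiding contributes exactly e^{2 pi i p_{ij} / N_{ij}} to
   B(a_i, a_j), and e^{2 pi i floor(t_i) / N_i} to theta(a_i); the twist n_i / N_i^2 of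
   phi_i supplies the missing half-integer part of t_i.  On the group side, the phi-
   coordinates of sum_i m_i a_i are the m_i themselves, while the c_j-coordinate of a_i is
   a multiple of N_j / N_{ij}, so N_i times it is a multiple of lcm(N_i, N_j) and vanishes
   modulo N_j. *)

From Stdlib Require Import ZArith Znumtheory Reals.
From Coquelicot Require Import Coquelicot.
From Stdlib Require Import Lra Lia FunctionalExtensionality.

Open Scope Z_scope.

Lemma expi_add (a b : R) : (expi a * expi b)%C = expi (a + b).
Proof.
  unfold expi, Cmult; simpl.
  replace (2 * PI * (a + b))%R with (2 * PI * a + 2 * PI * b)%R by ring.
  rewrite cos_plus, sin_plus. f_equal; ring.
Qed.

Lemma expi_0 : expi 0 = RtoC 1.
Proof. unfold expi, RtoC. rewrite Rmult_0_r, cos_0, sin_0. reflexivity. Qed.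

Lemma expi_neq0 (a : R) : expi a <> RtoC 0.
Proof.
  intros E. injection E as Hcos Hsin.
  apply (cos_sin_0 (2 * PI * a)); auto.
Qed.

Lemma Cmult_reg_r (x y z : C) : z <> RtoC 0 -> (x * z)%C = (y * z)%C -> x = y.
Proof.
  intros Hz E.
  transitivity (x * z * / z)%C; [field; auto|]. rewrite E. field; auto.
Qed.

Lemma Cmult_idem_eq1 (z : C) : z <> RtoC 0 -> (z * z)%C = z -> z = RtoC 1.
Proof. intros Hz E. apply (Cmult_reg_r _ _ z Hz). rewrite Cmult_1_l. exact E. Qed.

Definition gcomb (n : nat) (e : nat -> Z) (g : nat -> elt) : elt :=
  gsum n (fun j => gscale (e j) (g j)).

Lemma gadd_gzero_l (x : elt) : gadd gzero x = x.
Proof. destruct x as [u v]. unfold gadd, gzero; simpl. f_equal; apply functional_extensionality; intros; ring. Qed.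

Lemma gscale_0 (x : elt) : gscale 0 x = gzero.
Proof. unfold gscale, gzero. f_equal; apply functional_extensionality; intros; ring. Qed.

Lemma gscale_succ (k : Z) (x : elt) : gscale (Z.succ k) x = gadd (gscale k x) x.
Proof. unfold gscale, gadd; simpl. f_equal; apply functional_extensionality; intros; ring. Qed.

Lemma fst_gcomb_gen_c (n : nat) (e : nat -> Z) (l : nat) :
  fst (gcomb n e gen_c) l = if Nat.ltb l n then e l else 0.
Proof.
  induction n as [|n IH]; [reflexivity|]. cbn [gcomb gsum gadd gscale gen_c fst].
  fold (gcomb n e gen_c). rewrite IH. unfold delta.
  destruct (Nat.ltb_spec l n), (Nat.ltb_spec l (S n)), (Nat.eqb_spec l n);
    try lia; subst; ring.
Qed.

Lemma snd_gcomb_gen_c (n : nat) (e : nat -> Z) (l : nat) : snd (gcomb n e gen_c) l = 0.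
Proof.
  induction n as [|n IH]; [reflexivity|]. cbn [gcomb gsum gadd gscale gen_c snd].
  fold (gcomb n e gen_c). rewrite IH. ring.
Qed.

Lemma snd_gcomb_delta (n : nat) (m : nat -> Z) (g : nat -> elt) (l : nat) :
  (forall j, snd (g j) = delta j) ->
  snd (gcomb n m g) l = if Nat.ltb l n then m l else 0.
Proof.
  intros Hg. induction n as [|n IH]; [reflexivity|]. cbn [gcomb gsum gadd gscale snd].
  fold (gcomb n m g). rewrite IH, Hg. unfold delta.
  destruct (Nat.ltb_spec l n), (Nat.ltb_spec l (S n)), (Nat.eqb_spec l n);
    try lia; subst; ring.
Qed.

Lemma divide_fst_gcomb (d : Z) (n : nat) (e : nat -> Z) (g : nat -> elt) (l : nat) :
  (forall j, (j < n)%nat -> (d | e j * fst (g j) l)) -> (d | fst (gcomb n e g) l).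
Proof.
  induction n as [|n IH]; intros H; cbn [gcomb gsum gadd gzero fst].
  - apply Z.divide_0_r.
  - apply Z.divide_add_r; [apply IH | apply H]; intros; try apply H; lia.
Qed.

Lemma gen_a_gcomb (N T : nat -> Z) (p : nat -> nat -> Z) (i : nat) :
  gen_a N T p i =
  gadd (gen_phi i) (gcomb (S i) (fun j => pfull T p j i * N j / Z.gcd (N i) (N j)) gen_c).
Proof. reflexivity. Qed.

Lemma fst_gen_a (N T : nat -> Z) (p : nat -> nat -> Z) (i l : nat) :
  fst (gen_a N T p i) l =
  if Nat.ltb l (S i) then pfull T p l i * N l / Z.gcd (N i) (N l) else 0.
Proof. rewrite gen_a_gcomb. cbn [gadd gen_phi fst]. now rewrite fst_gcomb_gen_c. Qed.

Lemma snd_gen_a (N T : nat -> Z) (p : nat -> nat -> Z) (i : nat) :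
  snd (gen_a N T p i) = delta i.
Proof.
  apply functional_extensionality. intros l. rewrite gen_a_gcomb. cbn [gadd gen_phi snd].
  rewrite snd_gcomb_gen_c. ring.
Qed.

Lemma prime_power_pos (n : Z) : prime_power n -> 0 < n.
Proof.
  intros (q & k & Hq & Hk & ->). apply Z.pow_pos_nonneg; [|lia].
  pose proof (prime_ge_2 q Hq). lia.
Qed.

Lemma divide_mul_div_gcd (a b k x : Z) :
  b <> 0 -> (a | k) -> (b | k * (x * b / Z.gcd a b)).
Proof.
  intros Hb [q ->].
  assert (Hg : Z.gcd a b <> 0) by (intros E; apply Z.gcd_eq_0 in E; lia).
  destruct (Z.gcd_divide_l a b) as [A HA], (Z.gcd_divide_r a b) as [B HB].
  assert (Hdiv : b / Z.gcd a b = B) by (rewrite HB at 1; apply Z.div_mul; auto).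
  rewrite Z.divide_div_mul_exact, Hdiv by (auto; apply Z.gcd_divide_r).
  exists (q * A * x). rewrite HA at 1. rewrite HB at 2. ring.
Qed.

Lemma IZR_mul_div_divide (x n g : Z) :
  n <> 0 -> g <> 0 -> (g | n) -> (IZR (x * n / g) / IZR n = IZR x / IZR g)%R.
Proof.
  intros Hn Hg [A ->].
  rewrite Z.mul_assoc, Z.div_mul, !mult_IZR by auto.
  field. split; apply not_0_IZR; lia.
Qed.

(* t / N = floor(t) / N + n / N^2, because n / N = t - floor(t) is 0 or 1/2. *)
Lemma n_of_twist (N T : Z) :
  0 < N -> (Z.Odd N -> Z.Even T) ->
  (IZR (n_of N T) / IZR (N ^ 2) + IZR (T / 2) / IZR N = IZR T / 2 / IZR N)%R.
Proof.
  intros HN HT. assert (HNr : IZR N <> 0%R) by (apply not_0_IZR; lia).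
  rewrite Z.pow_2_r, mult_IZR. unfold n_of.
  destruct (Z.Even_or_Odd T) as [[q ->]|[q ->]].
  - rewrite Z.even_even, Z.mul_comm, Z.div_mul, mult_IZR by lia. simpl. field. auto.
  - destruct (Z.Even_or_Odd N) as [[r Hr]|HNo];
      [|destruct (HT HNo) as [q' Hq']; lia].
    rewrite Z.even_odd, Hr, Z.mul_comm, Z.div_mul by lia.
    replace ((2 * q + 1) / 2) with q by (Z.div_mod_to_equations; lia).
    rewrite Hr in HNr. rewrite plus_IZR, !mult_IZR in *. simpl. field.
    intros E. apply HNr. rewrite E. ring.
Qed.

Section Generators.

Variables (M : nat) (N T : nat -> Z) (p : nat -> nat -> Z).
Hypothesis N_pos : forall i, (i < M)%nat -> 0 < N i.

Lemma divide_fst_gen_a (i l : nat) (k : Z) :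
  (l < M)%nat -> (N i | k) -> (N l | k * fst (gen_a N T p i) l).
Proof.
  intros Hl Hk. rewrite fst_gen_a. destruct (Nat.ltb l (S i)).
  - apply divide_mul_div_gcd; [specialize (N_pos l Hl); lia | exact Hk].
  - rewrite Z.mul_0_r. apply Z.divide_0_r.
Qed.

Lemma geq_gzero_gscale_gen_a (i : nat) (k : Z) :
  (i < M)%nat -> geq M N (gscale k (gen_a N T p i)) gzero <-> (N i | k).
Proof.
  intros Hi. unfold geq, gscale, gzero. cbn [fst snd].
  setoid_rewrite Z.sub_0_r. rewrite snd_gen_a. split.
  - intros H. destruct (H i Hi) as [_ Hk]. unfold delta in Hk.
    now rewrite Nat.eqb_refl, Z.mul_1_r in Hk.
  - intros Hk l Hl. split; [now apply divide_fst_gen_a|].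
    unfold delta. destruct (Nat.eqb_spec l i).
    + subst. now rewrite Z.mul_1_r.
    + rewrite Z.mul_0_r. apply Z.divide_0_r.
Qed.

Lemma geq_gzero_gcomb_gen_a (m : nat -> Z) :
  geq M N (gcomb M m (gen_a N T p)) gzero <-> (forall i, (i < M)%nat -> (N i | m i)).
Proof.
  unfold geq, gzero. cbn [fst snd]. setoid_rewrite Z.sub_0_r.
  setoid_rewrite snd_gcomb_delta; [|apply snd_gen_a..]. split.
  - intros H i Hi. destruct (H i Hi) as [_ Hm].
    now destruct (Nat.ltb_spec i M); [|lia].
  - intros H l Hl. split.
    + apply divide_fst_gcomb. intros j Hj. apply divide_fst_gen_a; auto.
    + destruct (Nat.ltb_spec l M); [auto | lia].
Qed.

End Generators.

Section AbelianAnyonTheory.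

Variable theta : elt -> C.
Hypothesis theta_unit : forall x, Cmod (theta x) = 1%R.
Hypothesis braid_sym : forall x y, braid theta x y = braid theta y x.
Hypothesis braid_gadd_l :
  forall x y z, braid theta (gadd x y) z = (braid theta x z * braid theta y z)%C.

Lemma theta_neq0 (x : elt) : theta x <> RtoC 0.
Proof. intros E. specialize (theta_unit x). rewrite E, Cmod_0 in theta_unit. lra. Qed.

Lemma theta_gadd (x y : elt) :
  theta (gadd x y) = (theta x * theta y * braid theta x y)%C.
Proof. unfold braid. pose proof (theta_neq0 x). pose proof (theta_neq0 y). field. auto. Qed.

Lemma braid_neq0 (x y : elt) : braid theta x y <> RtoC 0.
Proof.
  intros E. apply (theta_neq0 (gadd x y)).
  rewrite theta_gadd, E. apply Cmult_0_r.
Qed.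

Lemma braid_gadd_r (x y z : elt) :
  braid theta x (gadd y z) = (braid theta x y * braid theta x z)%C.
Proof. rewrite braid_sym, braid_gadd_l. f_equal; apply braid_sym. Qed.

Lemma braid_gzero_l (z : elt) : braid theta gzero z = RtoC 1.
Proof.
  apply Cmult_idem_eq1; [apply braid_neq0|].
  rewrite <- braid_gadd_l, gadd_gzero_l. reflexivity.
Qed.

Lemma theta_gzero : theta gzero = RtoC 1.
Proof.
  apply Cmult_idem_eq1; [apply theta_neq0|].
  rewrite <- (Cmult_1_r (theta gzero * theta gzero)), <- (braid_gzero_l gzero).
  rewrite <- theta_gadd, gadd_gzero_l. reflexivity.
Qed.

Lemma braid_gscale_l (x z : elt) (r : R) :
  braid theta x z = expi r -> forall k, braid theta (gscale k x) z = expi (IZR k * r).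
Proof.
  intros Hx. apply Z.peano_ind.
  - rewrite gscale_0, braid_gzero_l, Rmult_0_l, expi_0. reflexivity.
  - intros k Hk. rewrite gscale_succ, braid_gadd_l, Hx, Hk, expi_add, succ_IZR.
    f_equal. ring.
  - intros k Hk. apply (Cmult_reg_r _ _ (expi r)); [apply expi_neq0|].
    rewrite <- Hx, <- braid_gadd_l, <- gscale_succ, Z.succ_pred, Hk, Hx, expi_add.
    f_equal. rewrite <- Z.sub_1_r, minus_IZR. ring.
Qed.

Lemma braid_gscale_l_trivial (x z : elt) (k : Z) :
  braid theta x z = RtoC 1 -> braid theta (gscale k x) z = RtoC 1.
Proof.
  rewrite <- expi_0. intros Hx. rewrite (braid_gscale_l x z 0 Hx), Rmult_0_r. reflexivity.
Qed.

Lemma theta_gscale_boson (x : elt) :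
  theta x = RtoC 1 -> braid theta x x = RtoC 1 -> forall k, theta (gscale k x) = RtoC 1.
Proof.
  intros Hx Hxx. apply Z.peano_ind.
  - rewrite gscale_0. apply theta_gzero.
  - intros k Hk. rewrite gscale_succ, theta_gadd, Hx, Hk, braid_gscale_l_trivial by auto.
    rewrite !Cmult_1_r. reflexivity.
  - intros k Hk.
    rewrite <- (Z.succ_pred k), gscale_succ, theta_gadd, Hx, braid_gscale_l_trivial in Hk by auto.
    rewrite !Cmult_1_r in Hk. exact Hk.
Qed.

Lemma braid_gcomb_l_trivial (n : nat) (e : nat -> Z) (g : nat -> elt) (z : elt) :
  (forall j, (j < n)%nat -> braid theta (g j) z = RtoC 1) ->
  braid theta (gcomb n e g) z = RtoC 1.
Proof.
  induction n as [|n IH]; intros H; cbn [gcomb gsum].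
  - apply braid_gzero_l.
  - fold (gcomb n e g). rewrite braid_gadd_l, IH, braid_gscale_l_trivial by (auto; lia).
    apply Cmult_1_l.
Qed.

Lemma braid_gcomb_l_single (n : nat) (e : nat -> Z) (g : nat -> elt) (z : elt) (i : nat) (r : R) :
  (i < n)%nat ->
  (forall j, (j < n)%nat -> j <> i -> braid theta (g j) z = RtoC 1) ->
  braid theta (g i) z = expi r ->
  braid theta (gcomb n e g) z = expi (IZR (e i) * r).
Proof.
  intros Hi Hj Hgi. induction n as [|n IH]; [lia|]. cbn [gcomb gsum].
  fold (gcomb n e g). rewrite braid_gadd_l.
  destruct (Nat.eq_dec i n) as [->|Hin].
  - rewrite braid_gcomb_l_trivial, (braid_gscale_l _ _ r) by (auto; intros; apply Hj; lia).
    apply Cmult_1_l.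
  - rewrite IH, braid_gscale_l_trivial by (auto; lia). apply Cmult_1_r.
Qed.

Lemma theta_gcomb_bosons (n : nat) (e : nat -> Z) (g : nat -> elt) :
  (forall j, (j < n)%nat -> theta (g j) = RtoC 1) ->
  (forall j k, (j < n)%nat -> (k < n)%nat -> braid theta (g j) (g k) = RtoC 1) ->
  theta (gcomb n e g) = RtoC 1.
Proof.
  induction n as [|n IH]; intros Hg Hgg; cbn [gcomb gsum].
  - apply theta_gzero.
  - fold (gcomb n e g).
    assert (Hc : braid theta (gcomb n e g) (gscale (e n) (g n)) = RtoC 1).
    { apply braid_gcomb_l_trivial. intros j Hj.
      rewrite braid_sym. apply braid_gscale_l_trivial. apply Hgg; lia. }
    rewrite theta_gadd, IH, theta_gscale_boson, Hc by (intros; auto with arith).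
    rewrite !Cmult_1_l. reflexivity.
Qed.

Section StackedTwistedQuantumDoubles.

Variables (M : nat) (N T : nat -> Z) (p : nat -> nat -> Z).
Hypothesis N_pos : forall i, (i < M)%nat -> 0 < N i.
Hypothesis T_even : forall i, (i < M)%nat -> Z.Odd (N i) -> Z.Even (T i).
Hypothesis p_sym : forall i j, (i < M)%nat -> (j < M)%nat -> i <> j -> p i j = p j i.
Hypothesis theta_c : forall i, (i < M)%nat -> theta (gen_c i) = RtoC 1.
Hypothesis theta_phi : forall i, (i < M)%nat ->
  theta (gen_phi i) = expi (IZR (n_of (N i) (T i)) / IZR (N i ^ 2)).
Hypothesis braid_c_c : forall i j, (i < M)%nat -> (j < M)%nat ->
  braid theta (gen_c i) (gen_c j) = RtoC 1.
Hypothesis braid_phi_c : forall i j, (i < M)%nat -> (j < M)%nat ->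
  braid theta (gen_phi i) (gen_c j) = expi (IZR (if Nat.eqb i j then 1 else 0) / IZR (N i)).
Hypothesis braid_phi_phi : forall i j, (i < M)%nat -> (j < M)%nat -> i <> j ->
  braid theta (gen_phi i) (gen_phi j) = RtoC 1.

Lemma braid_gcomb_gen_c_phi (n : nat) (e : nat -> Z) (i : nat) :
  (n <= M)%nat -> (i < M)%nat ->
  braid theta (gcomb n e gen_c) (gen_phi i) =
  if Nat.ltb i n then expi (IZR (e i) / IZR (N i)) else RtoC 1.
Proof.
  intros Hn Hi.
  assert (Hc : forall j, (j < n)%nat ->
            braid theta (gen_c j) (gen_phi i) =
            expi (IZR (if Nat.eqb i j then 1 else 0) / IZR (N i)))
    by (intros j Hj; rewrite braid_sym; apply braid_phi_c; lia).
  destruct (Nat.ltb_spec i n).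
  - rewrite (braid_gcomb_l_single _ _ _ _ i (/ IZR (N i))); auto.
    + intros j Hj Hji. rewrite Hc, <- expi_0 by auto.
      destruct (Nat.eqb_spec i j); [lia|]. f_equal. unfold Rdiv. ring.
    + rewrite Hc, Nat.eqb_refl by auto. f_equal. unfold Rdiv. ring.
  - apply braid_gcomb_l_trivial. intros j Hj. rewrite Hc, <- expi_0 by auto.
    destruct (Nat.eqb_spec i j); [lia|]. f_equal. unfold Rdiv. ring.
Qed.

Lemma braid_gcomb_gen_c_gcomb_gen_c (n n' : nat) (e e' : nat -> Z) :
  (n <= M)%nat -> (n' <= M)%nat ->
  braid theta (gcomb n e gen_c) (gcomb n' e' gen_c) = RtoC 1.
Proof.
  intros Hn Hn'. apply braid_gcomb_l_trivial. intros j Hj.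
  rewrite braid_sym. apply braid_gcomb_l_trivial. intros k Hk. apply braid_c_c; lia.
Qed.

Lemma theta_gen_a (i : nat) :
  (i < M)%nat -> theta (gen_a N T p i) = expi (IZR (T i) / 2 / IZR (N i)).
Proof.
  intros Hi. pose proof (N_pos i Hi) as HNi.
  rewrite gen_a_gcomb, theta_gadd, theta_phi, theta_gcomb_bosons, braid_sym,
    braid_gcomb_gen_c_phi
    by (intros; first [lia | apply theta_c; lia | apply braid_c_c; lia]).
  destruct (Nat.ltb_spec i (S i)); [|lia].
  unfold pfull. rewrite Nat.eqb_refl, Z.gcd_diag, Z.abs_eq, Z.div_mul by lia.
  rewrite Cmult_1_r, expi_add. f_equal. apply n_of_twist; auto.
Qed.

Lemma braid_gen_a (i j : nat) :
  (i < M)%nat -> (j < M)%nat -> i <> j ->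
  braid theta (gen_a N T p i) (gen_a N T p j) =
  expi (IZR (p i j) / IZR (Z.gcd (N i) (N j))).
Proof.
  intros Hi Hj Hij. pose proof (N_pos i Hi). pose proof (N_pos j Hj).
  assert (Hg : Z.gcd (N i) (N j) <> 0) by (intros E; apply Z.gcd_eq_0 in E; lia).
  rewrite !gen_a_gcomb, braid_gadd_l, !braid_gadd_r, braid_phi_phi,
    braid_gcomb_gen_c_gcomb_gen_c, (braid_sym (gen_phi i)), !braid_gcomb_gen_c_phi by lia.
  unfold pfull. destruct (Nat.eqb_spec i j), (Nat.eqb_spec j i); try lia.
  destruct (Nat.ltb_spec i (S j)), (Nat.ltb_spec j (S i)); try lia;
    rewrite ?Cmult_1_l, ?Cmult_1_r.
  - rewrite Z.gcd_comm, IZR_mul_div_divide by (lia || apply Z.gcd_divide_l). reflexivity.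
  - rewrite p_sym, IZR_mul_div_divide by (lia || apply Z.gcd_divide_r). reflexivity.
Qed.

End StackedTwistedQuantumDoubles.

End AbelianAnyonTheory.

Theorem mainTheorem9
  (M : nat) (N : nat -> Z) (T : nat -> Z) (p : nat -> nat -> Z)
  (HN : forall i, (i < M)%nat -> prime_power (N i))
  (HT : forall i, (i < M)%nat -> Z.Odd (N i) -> Z.Even (T i))
  (Hp : forall i j, (i < M)%nat -> (j < M)%nat -> i <> j -> p i j = p j i)
  (theta : elt -> C)
  (Hwd : forall x y, geq M N x y -> theta x = theta y)
  (Hunit : forall x, Cmod (theta x) = 1%R)
  (Hsym : forall x y, braid theta x y = braid theta y x)
  (Hbim : forall x y z,
      braid theta (gadd x y) z = Cmult (braid theta x z) (braid theta y z))
  (Hc : forall i, (i < M)%nat -> theta (gen_c i) = 1%R)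
  (Hphi : forall i, (i < M)%nat ->
      theta (gen_phi i) = expi (IZR (n_of (N i) (T i)) / IZR (N i ^ 2)))
  (Hcc : forall i j, (i < M)%nat -> (j < M)%nat ->
      braid theta (gen_c i) (gen_c j) = 1%R)
  (Hphic : forall i j, (i < M)%nat -> (j < M)%nat ->
      braid theta (gen_phi i) (gen_c j) =
        expi (IZR (if Nat.eqb i j then 1 else 0) / IZR (N i)))
  (Hphiphi : forall i j, (i < M)%nat -> (j < M)%nat -> i <> j ->
      braid theta (gen_phi i) (gen_phi j) = 1%R) :
  let a := gen_a N T p in
  (forall i, (i < M)%nat -> forall k : Z,
      geq M N (gscale k (a i)) gzero <-> (N i | k)) /\
  (forall m : nat -> Z,
      geq M N (gsum M (fun i => gscale (m i) (a i))) gzero <->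
      (forall i, (i < M)%nat -> (N i | m i))) /\
  (forall i, (i < M)%nat -> theta (a i) = expi (IZR (T i) / 2 / IZR (N i))) /\
  (forall i j, (i < M)%nat -> (j < M)%nat -> i <> j ->
      braid theta (a i) (a j) = expi (IZR (p i j) / IZR (Z.gcd (N i) (N j)))).
Proof.
  intros a.
  assert (Npos : forall i, (i < M)%nat -> 0 < N i)
    by (intros i Hi; apply prime_power_pos, HN, Hi).
  split; [|split; [|split]].
  - intros i Hi k. now apply geq_gzero_gscale_gen_a.
  - intros m. now apply geq_gzero_gcomb_gen_a.
  - intros i Hi. now apply (theta_gen_a theta Hunit Hsym Hbim M N T p).
  - intros i j Hi Hj Hij. now apply (braid_gen_a theta Hunit Hsym Hbim M N T p).
Qed.
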